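(* Let $N$ be a tree rooted at $g$ with positive edge capacities and leaf set $L$, and let $G_R$ be a request graph on $V\cup\{g\}$, $|V|=k$, with bandwidths $f_e\ge0$. Let $T$ be the binary tree obtained from $N$ by Create-Binary-Tree, and run the dynamic program described in the context (Algorithm 2) on $T$ and $G_R$. Then the value $\mathrm{cong}[g,V]$ it returns equals the minimum, over all embeddings $\pi:V\to L$, of the congestion of $\pi$ in $N$.
   Context: Embedding problem: an embedding is an injective map $\pi:V\to L$ with $\pi(g)=g$; request edges are $(v_i,g)$ (type I, set $R^{I}$) or $(v_i,v_j)$ (type II, set $R^{II}$); the congestion of an edge $e$ of the host tree is $\frac1{c_e}\sum f_{(u,v)}$ over request edges $(u,v)$ whose host path between $\pi(u)$ and $\pi(v)$ contains $e$, and the congestion of $\pi$ is the maximum over host edges. Create-Binary-Tree$(N,g)$: for every node $v$ of $N$ of degree $>3$ with children $u_1,\dots,u_d$ via edges $e_1,\dots,e_d$, replace these edges by a binary tree rooted at $v$ with leaves $u_1,\dots,u_d$; the edge into $u_i$ gets capacity $c_{e_i}$, all other new edges capacity $\infty$. Algorithm 2: for a node $u$ of $T$ let $e_u$ be the edge from its parent to $u$, $u_l,u_r$ its left and right children, and $e_l,e_r$ the edges to them; $L^j$ is the set of nodes at distance $j$ from $g$ and $H$ the height of $T$. For each $S\subseteq V$ set $\mathrm{Flow}[S]=\sum_{(v,g)\in R^{I},v\in S}f_{(v,g)}+\sum_{(u,v)\in R^{II},u\in S,v\notin S}f_{(u,v)}$. For each leaf $u$ and $S\subseteq V$ set $\mathrm{cong}[u,S]=0$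 if $|S|\le1$ and $\infty$ otherwise. For $j=H,H-1,\dots,0$ and each non-leaf $u\in L^j$ and each $S\subseteq V$, set $\mathrm{cong}[u,S]=\min_{S_l\subseteq S}\max\{\mathrm{cong}[u_l,S_l],\mathrm{cong}[u_r,S\setminus S_l],\mathrm{Flow}[S_l]/c_{e_l},\mathrm{Flow}[S\setminus S_l]/c_{e_r}\}$ (recording a minimizing partition). Return $\mathrm{cong}[g,V]$. *)

From HB Require Import structures.
From mathcomp Require Import all_boot all_order all_algebra.
From mathcomp Require Import constructive_ereal.
Set Implicit Arguments. Unset Strict Implicit. Unset Printing Implicit Defensive.
Import Order.TTheory GRing.Theory Num.Theory.
Local Open Scope ring_scope.

Section Trees.
Variable T : finType.
Variable par : T -> T.
Variable r : T.

Definition is_rooted_tree : Prop :=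
  par r = r /\ forall x, exists n, iter n par x = r.

Definition anc (x w : T) : bool := [exists n : 'I_#|T|.+1, iter n par x == w].

Definition children (v : T) : {set T} := [set u | (u != r) && (par u == v)].

Definition is_leaf (u : T) : bool := (u != r) && (children u == set0).

(* The edge e_w joins par w and w (w != r).  It lies on the (unique) tree path
   between a and b iff w is an ancestor-or-self of exactly one of a, b. *)
Definition on_path (a b w : T) : bool := (w != r) && (anc a w != anc b w).
End Trees.

Section Embedding.
Variable R : realFieldType.
Variables (Node : finType) (par : Node -> Node) (g : Node) (c : Node -> R).
Variables (V : finType) (fI : V -> R) (fII : V -> V -> R).
(* fI v  = bandwidth of the type-I request (v,g) (0 = no request);
   fII u v = bandwidth of the type-II request between u and v.  *)

(* embeddings pi : V -> L, injective (pi g = g is implicit: leaves are <> g) *)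
Definition is_embedding (pi : {ffun V -> Node}) : bool :=
  injectiveb pi && [forall v, is_leaf par g (pi v)].

Definition edge_congestion (pi : {ffun V -> Node}) (w : Node) : R :=
  (\sum_(v : V | on_path par g (pi v) g w) fI v
   + \sum_(u : V) \sum_(v : V | on_path par g (pi u) (pi v) w) fII u v) / c w.

Definition congestion (pi : {ffun V -> Node}) : R :=
  \big[Num.max/0]_(w : Node | w != g) edge_congestion pi w.

Definition opt_congestion : \bar R :=
  \big[mine/+oo%E]_(pi : {ffun V -> Node} | is_embedding pi) (congestion pi)%:E.

Definition Flow (S : {set V}) : R :=
  \sum_(v in S) fI v + \sum_(u in S) \sum_(v in ~: S) (fII u v + fII v u).
End Embedding.

(* Create-Binary-Tree(N,g): (TN, parT, rT, cT) is a tree obtained from the tree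
   (Node, par, g, c) by the construction; emb identifies the original nodes
   inside TN; cT w = None encodes capacity infinity. *)
Definition create_binary_tree (R : realFieldType)
  (Node : finType) (par : Node -> Node) (g : Node) (c : Node -> R)
  (TN : finType) (parT : TN -> TN) (rT : TN) (cT : TN -> option R)
  (emb : Node -> TN) : Prop :=
  [/\ is_rooted_tree parT rT, injective emb & emb g = rT] /\
  [/\ (forall u, u != g -> cT (emb u) = Some (c u)),
      (forall w, (forall u, emb u != w) ->
          cT w = None /\ #|children parT rT w| = 2),
      (forall u, u != g -> exists2 n, (0 < n)%N &
          iter n parT (emb u) = emb (par u) /\
          forall m, (0 < m < n)%N -> forall u', iter m parT (emb u) != emb u')
      & (forall v, if (#|children par g v| <= 2)%N
                 then children parT rT (emb v) = emb @: children par g v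
                 else #|children parT rT (emb v)| = 2)].

Section DP.
Variable R : realFieldType.
Variables (V : finType) (TN : finType) (parT : TN -> TN) (rT : TN).
Variable cT : TN -> option R.
Variable Flow : {set V} -> R.

Definition load (w : TN) (x : R) : \bar R :=
  if cT w is Some cw then (x / cw)%:E else 0%E.

(* One round of the recurrence of Algorithm 2, applied at every node.  A node with a single child a is treated as if its other
   child carried nothing. *)
Definition dp_step (tab : TN -> {set V} -> \bar R) (u : TN) (S : {set V})
  : \bar R :=
  let Ch := children parT rT u in
  match [pick a in Ch] with
  | None => if (#|S| <= 1)%N then 0%E else +oo%E
  | Some a =>
    match [pick b in Ch :\ a] with
    | None => maxe (tab a S) (load a (Flow S))
    | Some b =>
      \big[mine/+oo%E]_(Sl : {set V} | Sl \subset S)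
        maxe (maxe (tab a Sl) (tab b (S :\: Sl)))
             (maxe (load a (Flow Sl)) (load b (Flow (S :\: Sl))))
    end
  end.

(* Iterating #|TN| (> height of the tree) rounds computes the table
   bottom-up, exactly as the level-by-level loop j = H, ..., 0. *)
Definition dp_table : TN -> {set V} -> \bar R :=
  iter #|TN| dp_step (fun _ _ => +oo%E).

Definition dp_result : \bar R := dp_table rT [set: V].
End DP.

From HB Require Import structures.
From mathcomp Require Import all_boot all_order all_algebra.
From mathcomp Require Import constructive_ereal.
Set Implicit Arguments. Unset Strict Implicit. Unset Printing Implicit Defensive.
Import Order.TTheory GRing.Theory Num.Theory.

(* For a node x of the binary tree and a set S of requesting vertices, let
   best_cost x S be the least possible maximal load on an edge strictly below x,
   over all injective placements of S on the leaves below x.  The load of the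
   edge into w is Flow of the set of vertices placed below w, divided by the
   capacity: this is exactly the congestion of that edge.  Splitting a placement
   between the (at most two) children of x shows that best_cost obeys the
   recurrence of Algorithm 2, so by induction on subtree size every table entry
   cong[x, S] equals best_cost x S.  Create-Binary-Tree preserves the leaves and
   the ancestor relation among original nodes, and its new edges have infinite
   capacity, i.e. load 0; so placements at the root of T are the embeddings into
   N, with the same cost. *)

Section RootedTree.
Variables (T : finType) (par : T -> T) (r : T).
Hypothesis tree : is_rooted_tree par r.

Local Notation anc := (anc par).
Local Notation ch := (children par r).

Lemma ancP x w : reflect (exists n, iter n par x = w) (anc x w).
Proof.
apply: (iffP existsP) => [[n /eqP <-]|[n xw]]; first by exists n.
have conn_xw : fconnect par x w by rewrite -xw fconnect_iter.
have lt_findex : (findex par x w < #|T|.+1)%N.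
  by rewrite ltnS (leq_trans (ltnW (findex_max conn_xw))) // max_card.
by exists (Ordinal lt_findex); rewrite /= iter_findex.
Qed.

Lemma anc_iter x n : anc x (iter n par x).
Proof. by apply/ancP; exists n. Qed.

Lemma anc_refl x : anc x x.
Proof. exact: (anc_iter x 0). Qed.

Lemma anc_par x : anc x (par x).
Proof. exact: (anc_iter x 1). Qed.

Lemma anc_trans x y z : anc x y -> anc y z -> anc x z.
Proof. by move=> /ancP[n <-] /ancP[m <-]; apply/ancP; exists (m + n)%N; rewrite iterD. Qed.

Lemma iter_root n : iter n par r = r.
Proof. by case: tree => par_r _; elim: n => //= n ->. Qed.

Lemma anc_root x : anc x r.
Proof. by case: tree => _ /(_ x) [n xr]; apply/ancP; exists n. Qed.

Lemma iter_cycle_root x n : (0 < n)%N -> iter n par x = x -> x = r.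
Proof.
move=> n_gt0 xn; case: tree => _ /(_ x) [N xN].
have periodic k : iter (k * n) par x = x.
  by elim: k => //= k IH; rewrite mulSn iterD IH xn.
by rewrite -(periodic N) -(subnK (leq_pmulr N n_gt0)) iterD xN iter_root.
Qed.

Lemma anc_antisym x y : anc x y -> anc y x -> x = y.
Proof.
move=> /ancP[n xy] /ancP[m yx].
have [/eqP|mn_gt0] := posnP (m + n).
  by rewrite addn_eq0 => /andP[_ /eqP n0]; rewrite -xy n0.
have xr : x = r by apply: (iter_cycle_root mn_gt0); rewrite iterD xy yx.
by rewrite -xy xr iter_root.
Qed.

Lemma par_neq x : x != r -> par x != x.
Proof. by apply: contraNneq => px; apply/eqP; exact: (@iter_cycle_root x 1 isT px). Qed.

Lemma anc_total x a b : anc x a -> anc x b -> anc a b || anc b a.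
Proof.
move=> /ancP[n <-] /ancP[m <-]; have [nm|mn] := leqP n m.
  by rewrite -(subnK nm) iterD anc_iter.
by rewrite -(subnK (ltnW mn)) iterD anc_iter orbT.
Qed.

Lemma anc_par_of_neq y w : anc y w -> y != w -> anc (par y) w.
Proof.
by move=> /ancP[[|n] <-] yw; [rewrite eqxx in yw | rewrite iterSr anc_iter].
Qed.

Lemma childrenP x a : reflect (par a = x /\ a != r) (a \in ch x).
Proof. by rewrite inE andbC; apply: (iffP andP) => -[/eqP]. Qed.

Lemma anc_child x a : a \in ch x -> anc a x.
Proof. by move/childrenP => [<- _]; exact: anc_par. Qed.

Lemma anc_child_parent x a : a \in ch x -> ~~ anc x a.
Proof.
move=> xa; apply/negP => /(anc_antisym (anc_child xa)) ax.
by case/childrenP: xa => pa /par_neq; rewrite pa ax eqxx.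
Qed.

Lemma anc_child_strict x a y : a \in ch x -> anc y a -> anc y x && (y != x).
Proof.
move=> xa ya; rewrite (anc_trans ya (anc_child xa)) /=.
by apply: contraNneq (anc_child_parent xa) => <-.
Qed.

Lemma exists_child_above x y : anc y x -> y != x ->
  exists2 z, z \in ch x & anc y z.
Proof.
move=> yx y_neq_x; have ex_n : exists n, iter n par y == x.
  by case/ancP: yx => n yn; exists n; apply/eqP.
case: (ex_minnP ex_n) => [[|m] /eqP ym min_m]; first by rewrite -ym eqxx in y_neq_x.
exists (iter m par y); last exact: anc_iter.
apply/childrenP; split=> //; apply/eqP => ymr.
have : (m.+1 <= m)%N by apply: min_m; rewrite -ym iterS ymr; case: tree => ->.
by rewrite ltnn.
Qed.

Lemma anc_children_eq x a b y : a \in ch x -> b \in ch x ->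
  anc y a -> anc y b -> a = b.
Proof.
have key a' b' : a' \in ch x -> b' \in ch x -> anc a' b' -> a' = b'.
  move=> xa' xb' ab'; apply/eqP; apply: contraNT (anc_child_parent xb') => ab_neq.
  by case/childrenP: xa' (anc_par_of_neq ab' ab_neq) => ->.
move=> xa xb ya yb; case/orP: (anc_total ya yb); first exact: key.
by move/(key _ _ xb xa) ->.
Qed.

Lemma anc_childless x y : ch x = set0 -> anc y x -> y = x.
Proof.
move=> chx yx; apply/eqP; apply: contraT => y_neq_x.
by case: (exists_child_above yx y_neq_x) => z; rewrite chx inE.
Qed.

Lemma card_subtree_child x a : a \in ch x ->
  (#|[set y | anc y a]| < #|[set y | anc y x]|)%N.
Proof.
move=> xa; apply/proper_card/properP; split.
  by apply/subsetP => y; rewrite !inE => /(anc_child_strict xa) /andP[].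
by exists x; rewrite !inE ?anc_refl // (negbTE (anc_child_parent xa)).
Qed.

End RootedTree.

Local Open Scope ring_scope.

Lemma bigmin_maxe_r (R : realFieldType) (I : finType) (P : pred I)
    (F : I -> \bar R) (K : \bar R) :
  \big[mine/+oo%E]_(i | P i) maxe (F i) K = maxe (\big[mine/+oo%E]_(i | P i) F i) K.
Proof.
apply/esym/(big_morph (maxe^~ K)); last by rewrite max_l ?leey.
by move=> a b; rewrite max_minl.
Qed.

Section DPCorrectness.
Variable R : realFieldType.
Variables (V : finType) (TN : finType) (parT : TN -> TN) (rT : TN).
Variable cT : TN -> option R.
Variable Flow : {set V} -> R.
Hypothesis tree : is_rooted_tree parT rT.
Hypothesis children_le2 : forall x, (#|children parT rT x| <= 2)%N.

Local Notation anc := (anc parT).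
Local Notation ch := (children parT rT).
Local Notation leaf := (is_leaf parT rT).
Local Notation load := (load cT).

Definition leaf_injection x (S : {set V}) (f : {ffun V -> TN}) : bool :=
  [forall v in S, anc (f v) x && leaf (f v)] &&
  [forall u in S, forall v in S, (f u == f v) ==> (u == v)].

Definition edge_load (S : {set V}) (f : {ffun V -> TN}) w : \bar R :=
  load w (Flow (S :&: [set v | anc (f v) w])).

Definition subtree_cost x S f : \bar R :=
  \big[maxe/0%E]_(w | (w != x) && anc w x) edge_load S f w.

Definition best_cost x S : \bar R :=
  \big[mine/+oo%E]_(f | leaf_injection x S f) subtree_cost x S f.

Lemma leaf_injectionP x (S : {set V}) (f : {ffun V -> TN}) : reflect
  ((forall v, v \in S -> anc (f v) x /\ leaf (f v)) /\
   {in S &, injective f}) (leaf_injection x S f).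
Proof.
apply: (iffP andP) => [[/forall_inP leafS /forall_inP injS]|[leafS injS]]; split.
- by move=> v /leafS /andP.
- move=> u v uS vS fuv; apply/eqP.
  by move/forall_inP: (injS u uS) => /(_ v vS); rewrite fuv eqxx.
- by apply/forall_inP => v /leafS[-> ->].
- by apply/forall_inP => u uS; apply/forall_inP => v vS; apply/implyP => /eqP/injS ->.
Qed.

Lemma subtree_cost_ge0 x S f : (0 <= subtree_cost x S f)%E.
Proof. exact: bigmax_ge_id. Qed.

Lemma leaf_neq_parent y x a : leaf y -> a \in ch x -> y != x.
Proof. by case/andP => _ /eqP chy; apply: contraTneq => yx; rewrite -yx chy inE. Qed.

Lemma eq_subtree_cost x (S : {set V}) (f f' : {ffun V -> TN}) :
  {in S, f =1 f'} -> subtree_cost x S f = subtree_cost x S f'.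
Proof.
move=> ff'; apply: eq_bigr => w _; congr (load _ (Flow _)).
by apply/setP => v; rewrite !inE; case vS: (v \in S); rewrite //= ff'.
Qed.

Lemma subtree_cost_below_child x a S f : a \in ch x ->
  \big[maxe/0%E]_(w | ((w != x) && anc w x) && anc w a) edge_load S f w =
  maxe (edge_load S f a) (subtree_cost a (S :&: [set v | anc (f v) a]) f).
Proof.
move=> xa; rewrite (eq_bigl (anc^~ a)); last first.
  move=> w; case wa: (anc w a); last by rewrite andbF.
  by rewrite andbT andbC; case/andP: (anc_child_strict tree xa wa) => -> ->.
rewrite (bigmaxID _ (pred1 a)) (eq_bigl (mem [set a])); last first.
  by move=> w; rewrite !inE andbC; case: eqP => [->|]; rewrite ?anc_refl.
rewrite bigmax_set1 -maxA; congr maxe; rewrite max_r ?bigmax_ge_id //.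
apply: eq_big => [w|w /andP[wa _]]; first by rewrite andbC.
congr (load _ (Flow _)); apply/setP => v; rewrite !inE.
by case fvw: (anc (f v) w); rewrite ?andbF // (anc_trans fvw wa) !andbT.
Qed.

Lemma best_cost_leaf x (S : {set V}) : x != rT -> ch x = set0 ->
  best_cost x S = if (#|S| <= 1)%N then 0%E else +oo%E.
Proof.
move=> x_neq_r chx.
have leaf_x : leaf x by rewrite /is_leaf x_neq_r chx eqxx.
have placed_at_x f : leaf_injection x S f -> {in S, forall v, f v = x}.
  by move=> /leaf_injectionP[leafS _] v /leafS[/(anc_childless tree chx)].
case: ifP => [S_le1|S_gt1].
  apply/le_anti/andP; split; last first.
    by apply: le_bigmin => *; [exact: leey | exact: subtree_cost_ge0].
  have inj_x : leaf_injection x S [ffun=> x].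
    apply/leaf_injectionP; split; first by move=> v _; rewrite ffunE anc_refl.
    by move=> u v uS vS _; apply: (card_le1_eqP S_le1).
  apply: le_trans (bigmin_le_cond _ _ inj_x) _.
  rewrite /subtree_cost big_pred0 // => w; apply/negbTE/negP => /andP[w_neq_x].
  by move/(anc_childless tree chx); apply/eqP.
rewrite /best_cost big_pred0 // => f; apply/negbTE/negP => injf.
have /card_gt1P[u [v [uS vS u_neq_v]]] : (1 < #|S|)%N by rewrite ltnNge S_gt1.
case/leaf_injectionP: (injf) => _ /(_ u v uS vS); rewrite !placed_at_x //.
by move/(_ erefl)/eqP; rewrite (negbTE u_neq_v).
Qed.

Section OneChild.
Variables (x a : TN).
Hypothesis ch_x : forall c, (c \in ch x) = (c == a).

Let xa : a \in ch x. Proof. by rewrite ch_x. Qed.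

Lemma anc_one_child y : anc y x -> leaf y -> anc y a.
Proof.
move=> yx /leaf_neq_parent /(_ xa) y_neq_x.
by case: (exists_child_above tree yx y_neq_x) => z; rewrite ch_x => /eqP ->.
Qed.

Lemma leaf_injection_one_child S f : leaf_injection x S f = leaf_injection a S f.
Proof.
apply/leaf_injectionP/leaf_injectionP => -[leafS injS]; split => // v /leafS[fvx fv].
  by split; rewrite ?anc_one_child.
by split; rewrite ?(anc_trans fvx (anc_child xa)).
Qed.

Lemma subtree_cost_one_child S f : leaf_injection x S f ->
  subtree_cost x S f = maxe (subtree_cost a S f) (load a (Flow S)).
Proof.
case/leaf_injectionP => leafS _.
have S_below_a : S :&: [set v | anc (f v) a] = S.
  by apply/setIidPl/subsetP => v vS; have [fvx fv] := leafS v vS; rewrite inE anc_one_child.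
rewrite {1}/subtree_cost (bigmaxID _ (anc^~ a)) subtree_cost_below_child //.
rewrite [X in maxe _ X]big_pred0; last first.
  move=> w; apply/negbTE/negP => /andP[/andP[w_neq_x wx]].
  by case: (exists_child_above tree wx w_neq_x) => z; rewrite ch_x => /eqP -> ->.
rewrite max_l ?le_max ?subtree_cost_ge0 ?orbT //.
by rewrite S_below_a /edge_load S_below_a maxC.
Qed.

Lemma best_cost_one_child S :
  best_cost x S = maxe (best_cost a S) (load a (Flow S)).
Proof.
rewrite /best_cost -bigmin_maxe_r; apply: eq_big => [f|f].
  exact: leaf_injection_one_child.
exact: subtree_cost_one_child.
Qed.

End OneChild.

Section TwoChildren.
Variables (x a b : TN).
Hypothesis a_neq_b : a != b.
Hypothesis ch_x : forall c, (c \in ch x) = (c == a) || (c == b).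

Let xa : a \in ch x. Proof. by rewrite ch_x eqxx. Qed.
Let xb : b \in ch x. Proof. by rewrite ch_x eqxx orbT. Qed.

Lemma anc_child_a_not_b y : anc y a -> ~~ anc y b.
Proof.
move=> ya; apply: contra a_neq_b => yb.
by rewrite (anc_children_eq tree xa xb ya yb).
Qed.

Lemma anc_below_two_children y : anc y x -> y != x -> anc y a || anc y b.
Proof.
move=> yx y_neq_x; case: (exists_child_above tree yx y_neq_x) => z.
by rewrite ch_x => /orP[] /eqP -> ->; rewrite ?orbT.
Qed.

Lemma anc_leaf_not_a_is_b y : anc y x -> leaf y -> ~~ anc y a -> anc y b.
Proof.
move=> yx /leaf_neq_parent /(_ xa) y_neq_x.
by case/orP: (anc_below_two_children yx y_neq_x) => [->|].
Qed.

Lemma subtree_cost_two_children S f : leaf_injection x S f ->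
  let Sl := S :&: [set v | anc (f v) a] in
  subtree_cost x S f =
  maxe (maxe (subtree_cost a Sl f) (subtree_cost b (S :\: Sl) f))
       (maxe (load a (Flow Sl)) (load b (Flow (S :\: Sl)))).
Proof.
case/leaf_injectionP => leafS _ Sl.
have S_below_b : S :&: [set v | anc (f v) b] = S :\: Sl.
  apply/setP => v; rewrite !inE; case vS: (v \in S); rewrite ?andbF //=.
  have [fvx fv] := leafS v vS; case fva: (anc (f v) a).
    exact/negbTE/anc_child_a_not_b.
  exact: anc_leaf_not_a_is_b fvx fv (negbT fva).
rewrite {1}/subtree_cost (bigmaxID _ (anc^~ a)) subtree_cost_below_child //.
rewrite (eq_bigl (fun w => ((w != x) && anc w x) && anc w b)); last first.
  move=> w; case wb: (anc w b); rewrite ?andbT ?andbF.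
    case/andP: (anc_child_strict tree xb wb) => -> ->.
    by apply: contraTN wb => /anc_child_a_not_b.
  apply/negbTE/negP => /andP[/andP[w_neq_x wx] /negbTE wa].
  by move: (anc_below_two_children wx w_neq_x); rewrite wa wb.
by rewrite subtree_cost_below_child // S_below_b /edge_load S_below_b -/Sl maxACA maxC.
Qed.

Definition glue (Sl : {set V}) (fa fb : {ffun V -> TN}) : {ffun V -> TN} :=
  [ffun v => if v \in Sl then fa v else fb v].

Section Glue.
Variables (S Sl : {set V}) (fa fb : {ffun V -> TN}).
Hypotheses (inj_a : leaf_injection a Sl fa) (inj_b : leaf_injection b (S :\: Sl) fb).

Lemma leaf_injection_glue : leaf_injection x S (glue Sl fa fb).
Proof.
case/leaf_injectionP: inj_a => leaf_a injf_a; case/leaf_injectionP: inj_b => leaf_b injf_b.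
have leaf_glue v : v \in S -> anc (glue Sl fa fb v) x /\ leaf (glue Sl fa fb v).
  rewrite ffunE; case: ifP => [vSl _|vSl vS].
    by have [fva ?] := leaf_a v vSl; rewrite (anc_trans fva (anc_child xa)).
  have [|fvb ?] := leaf_b v; first by rewrite inE vSl.
  by rewrite (anc_trans fvb (anc_child xb)).
apply/leaf_injectionP; split=> // u v uS vS; rewrite !ffunE.
have not_both y z : y \in Sl -> z \notin Sl -> z \in S -> fa y != fb z.
  move=> ySl zSl zS; have [fya _] := leaf_a y ySl.
  have [|fzb _] := leaf_b z; first by rewrite inE zSl.
  by apply: contraTneq fzb => <-; exact: anc_child_a_not_b.
case: ifP => uSl; case: ifP => vSl.
- exact: injf_a.
- by move/eqP; rewrite (negbTE (not_both _ _ uSl (negbT vSl) vS)).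
- by move/esym/eqP; rewrite (negbTE (not_both _ _ vSl (negbT uSl) uS)).
- by apply: injf_b; rewrite inE ?uSl ?vSl.
Qed.

Lemma glue_below_a : Sl \subset S -> S :&: [set v | anc (glue Sl fa fb v) a] = Sl.
Proof.
move=> sub_S; apply/setP => v; rewrite !inE ffunE.
case: ifP => [vSl|vSl].
  by case/leaf_injectionP: inj_a => /(_ v vSl)[-> _] _; rewrite (subsetP sub_S).
case vS: (v \in S) => //=; case/leaf_injectionP: inj_b => leaf_b _.
have [|fvb _] := leaf_b v; first by rewrite inE vSl vS.
by apply/negbTE; apply: contraTN fvb => /anc_child_a_not_b.
Qed.

End Glue.

Lemma leaf_injection_below_a S f : leaf_injection x S f ->
  leaf_injection a (S :&: [set v | anc (f v) a]) f.
Proof.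
case/leaf_injectionP => leafS injS; apply/leaf_injectionP; split.
  by move=> v /setIP[/leafS[_ ?]]; rewrite inE.
by apply: sub_in2 injS => v /setIP[].
Qed.

Lemma leaf_injection_below_b S f : leaf_injection x S f ->
  leaf_injection b (S :\: (S :&: [set v | anc (f v) a])) f.
Proof.
case/leaf_injectionP => leafS injS; apply/leaf_injectionP; split.
  move=> v /setDP[vS]; have [fvx fv] := leafS v vS.
  by rewrite !inE vS /= => /(anc_leaf_not_a_is_b fvx fv).
by apply: sub_in2 injS => v /setDP[].
Qed.

Lemma best_cost_le_split (S Sl : {set V}) : Sl \subset S ->
  (best_cost x S <=
   maxe (maxe (best_cost a Sl) (best_cost b (S :\: Sl)))
        (maxe (load a (Flow Sl)) (load b (Flow (S :\: Sl)))))%E.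
Proof.
move=> sub_S.
have [fa0 inj_a0|no_a] := pickP (leaf_injection a Sl); last first.
  by rewrite {2}/best_cost big_pred0 // !maxye leey.
have [fb0 inj_b0|no_b] := pickP (leaf_injection b (S :\: Sl)); last first.
  by rewrite {3}/best_cost big_pred0 // maxey maxye leey.
case: (eq_bigmin _ _ (subtree_cost a Sl) inj_a0 (fun f _ => leey _)) => fa.
rewrite unfold_in => inj_a best_a.
case: (eq_bigmin _ _ (subtree_cost b (S :\: Sl)) inj_b0 (fun f _ => leey _)) => fb.
rewrite unfold_in => inj_b best_b.
have inj_glue := leaf_injection_glue inj_a inj_b.
rewrite /best_cost best_a best_b -/(best_cost x S).
apply: le_trans (bigmin_le_cond _ _ inj_glue) _.
rewrite (subtree_cost_two_children inj_glue) /= glue_below_a //.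
rewrite (@eq_subtree_cost a Sl _ fa); last by move=> v vSl; rewrite ffunE vSl.
rewrite (@eq_subtree_cost b (S :\: Sl) _ fb) //.
by move=> v /setDP[_ /negbTE vSl]; rewrite ffunE vSl.
Qed.

Lemma best_cost_two_children (S : {set V}) :
  best_cost x S =
  \big[mine/+oo%E]_(Sl : {set V} | Sl \subset S)
    maxe (maxe (best_cost a Sl) (best_cost b (S :\: Sl)))
         (maxe (load a (Flow Sl)) (load b (Flow (S :\: Sl)))).
Proof.
apply/le_anti/andP; split.
  by apply: le_bigmin => [|Sl]; [exact: leey | exact: best_cost_le_split].
apply: le_bigmin => [|f injf]; first exact: leey.
rewrite (subtree_cost_two_children injf) /=.
apply: bigmin_inf (subsetIl S _) _; apply: le_max2 => //.
by apply: le_max2; apply: bigmin_le_cond;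
  [exact: leaf_injection_below_a | exact: leaf_injection_below_b].
Qed.

End TwoChildren.

Lemma children_single x a : a \in ch x -> (forall c, (c \in ch x :\ a) = false) ->
  forall c, (c \in ch x) = (c == a).
Proof.
move=> xa no_other c; apply/idP/eqP => [xc|-> //].
by apply/eqP; apply: contraFT (no_other c) => c_neq_a; rewrite in_setD1 c_neq_a.
Qed.

Lemma children_pair x a b : a \in ch x -> b \in ch x :\ a ->
  forall c, (c \in ch x) = (c == a) || (c == b).
Proof.
move=> xa /setD1P[b_neq_a xb] c; apply/idP/idP => [xc|/orP[]/eqP-> //].
apply: contraTT (children_le2 x); rewrite negb_or -ltnNge => /andP[c_neq_a c_neq_b].
apply: leq_trans (subset_leq_card (_ : c |: [set a; b] \subset ch x)).
  by rewrite cardsU1 cards2 !inE negb_or c_neq_a c_neq_b eq_sym b_neq_a.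
by apply/subsetP => y /setU1P[->|/set2P[]->].
Qed.

(* A childless root must be excluded: dp_step treats it as a leaf, is_leaf does not. *)
Lemma iter_dp_step_best_cost n x S : (#|[set y | anc y x]| <= n)%N ->
  (x != rT) || (ch x != set0) ->
  iter n (dp_step parT rT cT Flow) (fun _ _ => +oo%E) x S = best_cost x S.
Proof.
elim: n x S => [|n IH] x S size_x x_inner.
  by move: size_x; rewrite leqn0 cards_eq0 => /eqP/setP/(_ x); rewrite !inE anc_refl.
have IH_child a : a \in ch x -> forall S',
    iter n (dp_step parT rT cT Flow) (fun _ _ => +oo%E) a S' = best_cost a S'.
  move=> xa S'; apply: IH; last by case/childrenP: xa => _ ->.
  by rewrite -ltnS (leq_trans (card_subtree_child tree xa)).
rewrite iterS /dp_step /=; case: pickP => [a xa|no_child]; last first.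
  have chx : ch x = set0 by apply/setP => c; rewrite in_set0 no_child.
  by rewrite chx eqxx orbF in x_inner; rewrite best_cost_leaf.
case: pickP => [b xb|no_other].
  have ch_x := children_pair xa xb.
  have a_neq_b : a != b by case/setD1P: xb; rewrite eq_sym.
  rewrite (best_cost_two_children a_neq_b ch_x); apply: eq_bigr => Sl _.
  by rewrite !IH_child // ch_x eqxx ?orbT.
by rewrite (best_cost_one_child (children_single xa no_other)) IH_child.
Qed.

Lemma dp_table_root S : ch rT != set0 ->
  dp_table parT rT cT Flow rT S = best_cost rT S.
Proof.
by move=> ch_r; rewrite /dp_table iter_dp_step_best_cost ?max_card ?ch_r ?orbT.
Qed.

End DPCorrectness.

Lemma edge_congestionE (R : realFieldType) (Node : finType) (par : Node -> Node)
    (g : Node) (c : Node -> R) (V : finType) (fI : V -> R) (fII : V -> V -> R)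
    (pi : {ffun V -> Node}) (u : Node) :
  is_rooted_tree par g -> u != g ->
  edge_congestion par g c fI fII pi u =
  Flow fI fII [set v | anc par (pi v) u] / c u.
Proof.
move=> tree u_neq_g; rewrite /edge_congestion /Flow; congr (_ / _).
set S := [set v | anc par (pi v) u].
have g_not_below_u : anc par g u = false.
  by apply: contraNF u_neq_g => /ancP[n]; rewrite iter_root // => ->.
have on_pathE a b : on_path par g a b u = (anc par a u != anc par b u).
  by rewrite /on_path u_neq_g.
congr (_ + _).
  by apply: eq_bigl => v; rewrite on_pathE g_not_below_u inE; case: anc.
under [in RHS]eq_bigr do rewrite big_split.
rewrite big_split /= [X in _ = _ + X]exchange_big /= (bigID (mem S)) /=.
congr (_ + _).
  apply: eq_bigr => w; rewrite inE => wS; apply: eq_bigl => v.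
  by rewrite on_pathE !inE wS; case: anc.
apply: eq_big => [w|w]; first by rewrite in_setC.
rewrite inE => /negbTE wS; apply: eq_bigl => v.
by rewrite on_pathE !inE wS; case: anc.
Qed.

Section BinaryTreeEmbedding.
Variable R : realFieldType.
Variables (Node : finType) (par : Node -> Node) (g : Node) (c : Node -> R).
Variables (TN : finType) (parT : TN -> TN) (rT : TN) (cT : TN -> option R)
  (emb : Node -> TN).
Hypothesis tree : is_rooted_tree par g.
Hypothesis binary : create_binary_tree par g c parT rT cT emb.

Lemma binary_tree : is_rooted_tree parT rT.
Proof. by case: binary => [[]]. Qed.

Lemma emb_inj : injective emb.
Proof. by case: binary => [[]]. Qed.

Lemma emb_root : emb g = rT.
Proof. by case: binary => [[]]. Qed.

Lemma cap_emb u : u != g -> cT (emb u) = Some (c u).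
Proof. by case: binary => _ [cap _ _ _]; exact: cap. Qed.

Lemma new_node w : (forall u, emb u != w) ->
  cT w = None /\ #|children parT rT w| = 2.
Proof. by case: binary => _ [_ new _ _]; exact: new. Qed.

Lemma iter_emb_par u : u != g -> exists2 n, (0 < n)%N &
  iter n parT (emb u) = emb (par u) /\
  forall m, (0 < m < n)%N -> forall u', iter m parT (emb u) != emb u'.
Proof. by case: binary => _ [_ _ lift _]; exact: lift. Qed.

Lemma children_emb v : if (#|children par g v| <= 2)%N
  then children parT rT (emb v) = emb @: children par g v
  else #|children parT rT (emb v)| = 2.
Proof. by case: binary => _ [_ _ _ chv]; exact: chv. Qed.

Lemma emb_or_new w : (exists u, w = emb u) \/ (forall u, emb u != w).
Proof.
case: (pickP (fun u => emb u == w)) => [u /eqP <-|none]; first by left; exists u.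
by right => u; rewrite none.
Qed.

Lemma binary_children_le2 w : (#|children parT rT w| <= 2)%N.
Proof.
case: (emb_or_new w) => [[u ->]|/new_node[_ ->] //].
have := children_emb u; case: ifP => [le2 ->|_ -> //].
exact: leq_trans (leq_imset_card _ _) le2.
Qed.

Lemma is_leaf_emb u : is_leaf parT rT (emb u) = is_leaf par g u.
Proof.
rewrite /is_leaf -{1}emb_root (inj_eq emb_inj); congr andb.
have := children_emb u; case: ifP => [_ ->|le2 card2]; first by rewrite imset_eq0.
apply/eqP/eqP => chu; first by rewrite chu cards0 in card2.
by rewrite chu cards0 in le2.
Qed.

Lemma leaf_emb_image w : is_leaf parT rT w -> exists u, w = emb u.
Proof.
case: (emb_or_new w) => // /new_node[_ card2] /andP[_ /eqP chw].
by rewrite chw cards0 in card2.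
Qed.

Lemma anc_of_anc_emb x u : anc parT (emb x) (emb u) -> anc par x u.
Proof.
case/ancP => m; elim/ltn_ind: m x => m IH x xu.
have [xg|x_neq_g] := eqVneq x g.
  move: xu; rewrite xg emb_root (iter_root binary_tree) // -emb_root.
  by move/emb_inj <-; exact: anc_refl.
have [n n_gt0 [emb_par no_emb_below]] := iter_emb_par x_neq_g.
have [m0|m_gt0] := posnP m; first by move: xu; rewrite m0 => /emb_inj ->; exact: anc_refl.
have [mn|nm] := ltnP m n.
  by have := no_emb_below m; rewrite m_gt0 mn xu => /(_ isT u); rewrite eqxx.
apply: anc_trans (anc_par par x) (IH (m - n)%N _ _ _); first by rewrite ltn_subrL n_gt0 m_gt0.
by rewrite -emb_par -iterD subnK.
Qed.

Lemma anc_emb_of_anc x u : anc par x u -> anc parT (emb x) (emb u).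
Proof.
case/ancP => k; elim: k x => [|k IH] x; first by move=> /= ->; exact: anc_refl.
have [xg|x_neq_g] := eqVneq x g.
  by rewrite iterSr xg; case: tree => -> _; rewrite -xg; exact: IH.
rewrite iterSr => /IH; apply: anc_trans.
by have [n _ [emb_par _]] := iter_emb_par x_neq_g; apply/ancP; exists n.
Qed.

Lemma anc_emb x u : anc parT (emb x) (emb u) = anc par x u.
Proof. by apply/idP/idP; [exact: anc_of_anc_emb | exact: anc_emb_of_anc]. Qed.

Lemma binary_root_has_child : (exists u, u != g) -> children parT rT rT != set0.
Proof.
case=> u u_neq_g; case: (exists_child_above tree (anc_root tree u) u_neq_g) => z gz _.
have := children_emb g; rewrite emb_root; case: ifP => [_ ->|_ card2].
  by apply/set0Pn; exists (emb z); exact: imset_f.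
by apply/eqP => ch0; rewrite ch0 cards0 in card2.
Qed.

Variables (V : finType) (fI : V -> R) (fII : V -> V -> R).
Local Notation FlowR := (Flow fI fII).

Definition lift_embedding (pi : {ffun V -> Node}) : {ffun V -> TN} :=
  [ffun v => emb (pi v)].

Lemma edge_load_lift pi u : u != g ->
  edge_load parT cT FlowR setT (lift_embedding pi) (emb u) =
  (edge_congestion par g c fI fII pi u)%:E.
Proof.
move=> u_neq_g; rewrite /edge_load /load cap_emb // edge_congestionE // setTI.
by congr (EFin (FlowR _ / _)); apply/setP => v; rewrite !inE ffunE anc_emb.
Qed.

Lemma edge_load_new_node S f w : (forall u, emb u != w) ->
  edge_load parT cT FlowR S f w = 0%E.
Proof. by move=> /new_node[cw _]; rewrite /edge_load /load cw. Qed.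

Lemma subtree_cost_lift pi :
  subtree_cost parT cT FlowR rT setT (lift_embedding pi) =
  (congestion par g c fI fII pi)%:E.
Proof.
have congestion_ge0 : (0 <= congestion par g c fI fII pi)%R by exact: bigmax_ge_id.
apply/le_anti/andP; split.
  apply: bigmax_le => [|w /andP[w_neq_r _]]; first by rewrite lee_fin.
  case: (emb_or_new w) w_neq_r => [[u ->] emb_u_neq_r|new _]; last first.
    by rewrite edge_load_new_node ?lee_fin.
  have u_neq_g : u != g by apply: contraNneq emb_u_neq_r => ->; rewrite emb_root.
  by rewrite edge_load_lift // lee_fin; exact: le_bigmax_cond.
rewrite /congestion -EFin_bigmax; apply: bigmax_le => [|u u_neq_g].
  exact: subtree_cost_ge0.
rewrite -edge_load_lift //; apply: le_bigmax_cond.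
by rewrite (anc_root binary_tree) // andbT -emb_root (inj_eq emb_inj).
Qed.

Lemma leaf_injection_lift pi : is_embedding par g pi ->
  leaf_injection parT rT rT setT (lift_embedding pi).
Proof.
case/andP => /injectiveP pi_inj /forallP pi_leaf; apply/leaf_injectionP; split.
  by move=> v _; rewrite ffunE (anc_root binary_tree) // is_leaf_emb.
by move=> u v _ _; rewrite !ffunE => /emb_inj /pi_inj.
Qed.

Lemma leaf_injection_liftP f : leaf_injection parT rT rT setT f ->
  exists2 pi, is_embedding par g pi & f = lift_embedding pi.
Proof.
case/leaf_injectionP => leaf_f inj_f.
have f_emb v : exists u, f v == emb u.
  by case: (leaf_f v (in_setT v)) => _ /leaf_emb_image[u ->]; exists u.
pose pi := [ffun v => xchoose (f_emb v)].
have f_pi v : f v = emb (pi v) by rewrite ffunE; apply/eqP/(xchooseP (f_emb v)).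
exists pi; last by apply/ffunP => v; rewrite ffunE f_pi.
apply/andP; split.
  by apply/injectiveP => u v piuv; apply: inj_f; rewrite ?in_setT // !f_pi piuv.
apply/forallP => v; rewrite -is_leaf_emb -f_pi.
by case: (leaf_f v (in_setT v)).
Qed.

End BinaryTreeEmbedding.

Unset Implicit Arguments.

Theorem lemma3 (R : realFieldType)
  (Node : finType) (par : Node -> Node) (g : Node) (c : Node -> R)
  (V : finType) (fI : V -> R) (fII : V -> V -> R)
  (TN : finType) (parT : TN -> TN) (rT : TN) (cT : TN -> option R)
  (emb : Node -> TN) :
  is_rooted_tree par g ->
  (exists u, u != g) ->
  (forall u, u != g -> 0 < c u) ->
  (forall v, 0 <= fI v) ->
  (forall u v, 0 <= fII u v) ->
  create_binary_tree par g c parT rT cT emb ->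
  dp_result parT rT cT (Flow fI fII) = opt_congestion par g c fI fII.
Proof.
move=> tree nontrivial _ _ _ binary.
have binT := binary_tree binary.
rewrite /dp_result (dp_table_root cT (Flow fI fII) binT (binary_children_le2 binary));
  last exact: binary_root_has_child tree binary nontrivial.
apply/le_anti/andP; split.
  apply: le_bigmin => [|pi emb_pi]; first exact: leey.
  rewrite -(subtree_cost_lift tree binary).
  exact/bigmin_le_cond/(leaf_injection_lift binary).
apply: le_bigmin => [|f inj_f]; first exact: leey.
have [pi emb_pi ->] := leaf_injection_liftP binary inj_f.
by rewrite (subtree_cost_lift tree binary); exact: bigmin_le_cond.
Qed.
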